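(* Structural embeddings with $\mathrm{LPE}$ as node-level positional encoding are sufficiently node- and adjacency-identifying.
   Context: Graphs $G$ are finite, undirected, without self-loops and without isolated nodes, with $n$ nodes, adjacency matrix $\mathbf{A}(G)$ and degree matrix $\mathbf{D}$. The graph Laplacian is $\mathbf{L}=\mathbf{D}-\mathbf{A}(G)$ (the normalized Laplacian $\mathbf{D}^{-1/2}\mathbf{L}\mathbf{D}^{-1/2}$ may be used instead). Let $\lambda=(\lambda_1,\dots,\lambda_l)^T$ be the $l$ smallest (possibly repeated) eigenvalues and $\mathbf{V}\in\mathbb{R}^{n\times l}$ have as $j$-th column an eigenvector for $\lambda_j$ (orthonormal). $\mathrm{LPE}(\mathbf{V},\lambda)=\rho\big([\phi(\mathbf{V}^T_1,\lambda+\epsilon)\cdots\phi(\mathbf{V}^T_n,\lambda+\epsilon)]\big)$, where $\epsilon\in\mathbb{R}^l$ is a learnable zero-initialized vector, $\phi\colon\mathbb{R}^2\to\mathbb{R}^d$ is an FFN applied to each pair $(\mathbf{V}_{ij},\lambda_j+\epsilon_j)$, and $\rho\colon\mathbb{R}^{l\times d}\to\mathbb{R}^d$ is a permutation-equivariant network applied per node (e.g. sum over the $l$ entries followed by an FFN), giving a vector $\mathrm{emb}_{PE}(v)$ for each node $v$. Structural embeddings: $\mathbf{P}(v)=\mathsf{FFN}(\mathrm{emb}_{\deg}(v)+\mathrm{emb}_{PE}(v))$, with $\mathrm{emb}_{\deg}$ a learnable embedding of the node degree and $\mathsf{FFN}$ an MLP; all networks and dimensions are parameters. For $\mathbf{P}\in\mathbb{R}^{n\times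 d}$ and $\mathbf{W}^Q,\mathbf{W}^K\in\mathbb{R}^{d\times d}$ let $\tilde{\mathbf{P}}=\frac{1}{\sqrt{d_k}}\mathbf{P}\mathbf{W}^Q(\mathbf{P}\mathbf{W}^K)^T$ ($d_k>0$ fixed). $\mathbf{P}$ is node-identifying if for some $\mathbf{W}^Q,\mathbf{W}^K$: $\tilde{\mathbf{P}}_{ij}=\max_k\tilde{\mathbf{P}}_{ik}\iff i=j$; adjacency-identifying if for some $\mathbf{W}^Q,\mathbf{W}^K$: $\tilde{\mathbf{P}}_{ij}=\max_k\tilde{\mathbf{P}}_{ik}\iff\mathbf{A}(G)_{ij}=1$. Parametrized structural embeddings are sufficiently node-identifying (resp. adjacency-identifying) if there is a node-identifying (resp. adjacency-identifying) matrix $\mathbf{P}$ such that for every $\varepsilon>0$ some parameter choice yields embeddings $\mathbf{Q}$ with $\|\mathbf{P}-\mathbf{Q}\|_F<\varepsilon$. *)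

From HB Require Import structures.
From mathcomp Require Import all_boot all_order all_algebra.
From mathcomp Require Import reals.
Set Implicit Arguments. Unset Strict Implicit. Unset Printing Implicit Defensive.
Import Order.TTheory GRing.Theory Num.Theory.
Local Open Scope ring_scope.

Section Defs.
Variable R : realType.

Definition simple_graph n (e : rel 'I_n) : Prop :=
  (forall i j, e i j = e j i) /\ (forall i, ~~ e i i).
Definition no_isolated n (e : rel 'I_n) : Prop := forall i, exists j, e i j.

Definition adjmx n (e : rel 'I_n) : 'M[R]_n := \matrix_(i, j) (e i j)%:R.
Definition deg n (e : rel 'I_n) (v : 'I_n) : nat := #|[set u | e v u]|.
Definition degmx n (e : rel 'I_n) : 'M[R]_n := diag_mx (\row_i (deg e i)%:R).
Definition laplacian n (e : rel 'I_n) : 'M[R]_n := degmx e - adjmx e.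
Definition norm_laplacian n (e : rel 'I_n) : 'M[R]_n :=
  let Dm := diag_mx (\row_i (Num.sqrt (deg e i)%:R)^-1) in
  Dm *m laplacian e *m Dm.
Definition lap (normalized : bool) n (e : rel 'I_n) : 'M[R]_n :=
  if normalized then norm_laplacian e else laplacian e.

(* V (n x n) has orthonormal columns, column j is an eigenvector of Lm for
   eigenvalue lam j, eigenvalues sorted increasingly (l = n, all of them). *)
Definition eigendecomp n (Lm : 'M[R]_n) (V : 'M[R]_n) (lam : 'I_n -> R) : Prop :=
  [/\ V^T *m V = 1%:M,
      forall j, Lm *m col j V = lam j *: col j V
    & forall i j : 'I_n, (i <= j)%N -> lam i <= lam j].

Definition relu m (x : 'rV[R]_m) : 'rV[R]_m := map_mx (fun t => Num.max t 0) x.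

Record mlp (a b : nat) := MLP {
  mlp_h : nat;
  mlp_W0 : 'M[R]_(a, mlp_h);
  mlp_b0 : 'rV[R]_mlp_h;
  mlp_hidden : seq ('M[R]_(mlp_h, mlp_h) * 'rV[R]_mlp_h);
  mlp_W1 : 'M[R]_(mlp_h, b);
  mlp_b1 : 'rV[R]_b }.

Definition mlp_eval a b (f : mlp a b) (x : 'rV[R]_a) : 'rV[R]_b :=
  let z0 := relu (x *m mlp_W0 f + mlp_b0 f) in
  let z := foldl (fun z p => relu (z *m p.1 + p.2)) z0 (mlp_hidden f) in
  z *m mlp_W1 f + mlp_b1 f.

Record se_params (n d : nat) := SEParams {
  sp_eps : 'I_n -> R;
  sp_phi : mlp 2 d;
  sp_rho : mlp d d;
  sp_deg : nat -> 'rV[R]_d;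
  sp_ffn : mlp d d }.

Definition pair_row (x y : R) : 'rV[R]_2 :=
  \row_(k < 2) (if k == ord0 then x else y).

Definition lpe n d (V : 'M[R]_n) (lam : 'I_n -> R) (p : se_params n d)
  (v : 'I_n) : 'rV[R]_d :=
  mlp_eval (sp_rho p)
    (\sum_(j < n) mlp_eval (sp_phi p) (pair_row (V v j) (lam j + sp_eps p j))).

Definition struct_emb n d (e : rel 'I_n) (V : 'M[R]_n) (lam : 'I_n -> R)
  (p : se_params n d) : 'M[R]_(n, d) :=
  \matrix_(v < n) mlp_eval (sp_ffn p) (sp_deg p (deg e v) + lpe V lam p v).

Definition ptilde n d (dk : R) (P : 'M[R]_(n, d)) (WQ WK : 'M[R]_d) : 'M[R]_n :=
  (Num.sqrt dk)^-1 *: (P *m WQ *m (P *m WK)^T).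

Definition is_row_max n (Pt : 'M[R]_n) (i j : 'I_n) : Prop :=
  forall k, Pt i k <= Pt i j.

Definition node_identifying n d (dk : R) (P : 'M[R]_(n, d)) : Prop :=
  exists WQ WK : 'M[R]_d,
    forall i j, is_row_max (ptilde dk P WQ WK) i j <-> i = j.

Definition adjacency_identifying n d (dk : R) (e : rel 'I_n) (P : 'M[R]_(n, d))
  : Prop :=
  exists WQ WK : 'M[R]_d,
    forall i j, is_row_max (ptilde dk P WQ WK) i j <-> adjmx e i j = 1.

Definition frob m k (M : 'M[R]_(m, k)) : R :=
  Num.sqrt (\sum_(i < m) \sum_(j < k) M i j ^+ 2).

Definition suff_node_identifying n (dk : R)
  (emb : forall d, se_params n d -> 'M[R]_(n, d)) : Prop :=
  exists d (P : 'M[R]_(n, d)), node_identifying dk P /\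
    forall eps : R, 0 < eps -> exists p : se_params n d, frob (P - emb d p) < eps.

Definition suff_adjacency_identifying n (dk : R) (e : rel 'I_n)
  (emb : forall d, se_params n d -> 'M[R]_(n, d)) : Prop :=
  exists d (P : 'M[R]_(n, d)), adjacency_identifying dk e P /\
    forall eps : R, 0 < eps -> exists p : se_params n d, frob (P - emb d p) < eps.

End Defs.

Arguments adjmx {R n} e.
Arguments degmx {R n} e.
Arguments laplacian {R n} e.
Arguments norm_laplacian {R n} e.
Arguments lap {R} normalized {n} e.

From HB Require Import structures.
From mathcomp Require Import all_boot all_order all_algebra.
From mathcomp Require Import reals.
From mathcomp Require Import lra.
Set Implicit Arguments. Unset Strict Implicit. Unset Printing Implicit Defensive.
Import Order.TTheory GRing.Theory Num.Theory.
Local Open Scope ring_scope.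

(* The LPE can reproduce the eigenvector matrix V exactly. With epsilon_j :=
   2j - lambda_j, the one-layer ReLU network phi whose k-th output is
   max(x - y + 2k + 1, 0) sends (V_vj, 2j) to V_vj + 2(k - j) + 1 when j <= k
   and to 0 otherwise, because |V_vj| <= 1. Summing over j gives an invertible
   affine image of row v of V (through the upper triangular all-ones matrix),
   which the affine network rho undoes. Since V is orthogonal, choosing
   W^Q = 1 and W^K = (V^T M V)^T makes the attention scores M / sqrt(d_k);
   with M the identity or the adjacency matrix (whose rows are nonzero as there
   are no isolated nodes) the row maxima are exactly the diagonal, resp. the
   edges. *)

Lemma maxr0_subN (R : realDomainType) (t : R) : Num.max t 0 - Num.max (- t) 0 = t.
Proof. by rewrite !maxEle; case: (lerP t 0) => ?; case: (lerP (- t) 0) => ?; lra. Qed.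

Lemma orthonormal_cols_entry_bound (R : realFieldType) m n (V : 'M[R]_(m, n)) :
  V^T *m V = 1%:M -> forall i j, -1 <= V i j <= 1.
Proof.
move=> hV i j.
have col_norm1 : \sum_(k < m) V k j ^+ 2 = 1.
  have := congr1 (fun M : 'M[R]_n => M j j) hV; rewrite !mxE eqxx mulr1n => <-.
  by apply: eq_bigr => k _; rewrite !mxE expr2.
have rest_ge0 : 0 <= \sum_(k < m | k != i) V k j ^+ 2.
  by apply: sumr_ge0 => k _; exact: sqr_ge0.
move: col_norm1; rewrite (bigD1 i) //= => col_norm1; nra.
Qed.

Lemma frob0 (R : realType) m k : frob (0 : 'M[R]_(m, k)) = 0.
Proof.
rewrite /frob big1 ?sqrtr0 // => i _; rewrite big1 // => j _.
by rewrite mxE expr0n.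
Qed.

Lemma ptilde_orthonormal_rows (R : realType) n d (dk : R) (P : 'M[R]_(n, d))
    (M : 'M[R]_n) :
  P *m P^T = 1%:M -> ptilde dk P 1%:M (P^T *m M *m P)^T = (Num.sqrt dk)^-1 *: M.
Proof.
move=> hP; rewrite /ptilde trmx_mul trmxK !mulmx1 !mulmxA hP mul1mx -mulmxA hP.
by rewrite mulmx1.
Qed.

Lemma is_row_max_scaled_boolmx (R : realType) n (b : rel 'I_n) (s : R)
    (i j : 'I_n) :
  0 < s -> (exists k, b i k) ->
  is_row_max (s *: \matrix_(k, l) (b k l)%:R) i j <-> b i j.
Proof.
move=> s_gt0 [k bik]; rewrite /is_row_max; split.
  move=> /(_ k); rewrite !mxE bik mulr1; case: (b i j) => //.
  by rewrite mulr0 leNgt s_gt0.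
move=> bij l; rewrite !mxE bij mulr1.
by case: (b i l); rewrite ?mulr1 ?mulr0 // ltW.
Qed.

Lemma orthonormal_rows_row_max_boolmx (R : realType) n d (dk : R)
    (P : 'M[R]_(n, d)) (b : rel 'I_n) :
  0 < dk -> P *m P^T = 1%:M -> (forall i, exists k, b i k) ->
  exists WQ WK : 'M[R]_d, forall i j,
    is_row_max (ptilde dk P WQ WK) i j <-> b i j.
Proof.
move=> dk_gt0 hP b_row; exists 1%:M, (P^T *m \matrix_(k, l) (b k l)%:R *m P)^T.
move=> i j; rewrite ptilde_orthonormal_rows //.
by apply: is_row_max_scaled_boolmx; rewrite ?invr_gt0 ?sqrtr_gt0.
Qed.

Lemma node_identifying_orthonormal_rows (R : realType) n d (dk : R)
    (P : 'M[R]_(n, d)) :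
  0 < dk -> P *m P^T = 1%:M -> node_identifying dk P.
Proof.
move=> dk_gt0 hP.
have [|WQ [WK hW]] := orthonormal_rows_row_max_boolmx (b := eq_op) dk_gt0 hP.
  by move=> i; exists i.
by exists WQ, WK => i j; apply: iff_trans (hW i j) _; split => [/eqP | ->].
Qed.

Lemma adjmx_eq1 (R : realType) n (e : rel 'I_n) i j : adjmx e i j = 1 :> R <-> e i j.
Proof. by rewrite mxE; case: (e i j); split => // /eqP; rewrite eq_sym oner_eq0. Qed.

Lemma adjacency_identifying_orthonormal_rows (R : realType) n d (dk : R)
    (e : rel 'I_n) (P : 'M[R]_(n, d)) :
  0 < dk -> no_isolated e -> P *m P^T = 1%:M -> adjacency_identifying dk e P.
Proof.
move=> dk_gt0 no_iso hP.
have [WQ [WK hW]] := orthonormal_rows_row_max_boolmx dk_gt0 hP no_iso.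
by exists WQ, WK => i j; apply: iff_trans (hW i j) (iff_sym (@adjmx_eq1 R n e i j)).
Qed.

Section ExactLPE.
Variable R : realType.

(* relu z - relu (- z) = z *)
Definition affine_mlp a b (A : 'M[R]_(a, b)) (c : 'rV[R]_b) : mlp R a b :=
  MLP (row_mx A (- A)) (row_mx c (- c)) [::] (col_mx 1%:M (- 1%:M)) 0.

Lemma affine_mlpE a b (A : 'M[R]_(a, b)) (c : 'rV[R]_b) x :
  mlp_eval (affine_mlp A c) x = x *m A + c.
Proof.
rewrite /mlp_eval /= mul_mx_row add_row_mx /relu map_row_mx mul_row_col.
rewrite mulmx1 mulmxN mulmx1 addr0 mulmxN -opprD.
by apply/matrixP => i j; rewrite !mxE maxr0_subN.
Qed.

Definition staircase_mlp n : mlp R 2 n :=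
  MLP (\matrix_(r < 2, k < n) (if r == ord0 then 1 else -1))
    (\row_(k < n) (2 * k%:R + 1)) [::] 1%:M 0.

Lemma staircase_mlpE n (x y : R) :
  mlp_eval (staircase_mlp n) (pair_row x y) =
  \row_(k < n) Num.max (x - y + (2 * k%:R + 1)) 0.
Proof.
apply/rowP => k; rewrite /mlp_eval /= mulmx1 addr0 !mxE big_ord_recl big_ord1.
by rewrite !mxE /= mulr1 mulrN1.
Qed.

Lemma relu_staircase (x : R) (j k : nat) : -1 <= x <= 1 ->
  Num.max (x - 2 * j%:R + (2 * k%:R + 1)) 0 =
  if (j <= k)%N then x + (2 * (k%:R - j%:R) + 1) else 0.
Proof.
move=> /andP[x_ge x_le]; rewrite maxEle; case: leqP => [le_jk | lt_kj].
  have : (j%:R : R) <= k%:R by rewrite ler_nat.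
  by case: ifP => ? ?; lra.
have : (k%:R : R) + 1 <= j%:R by rewrite natr1 ler_nat.
by case: ifP => ? ?; lra.
Qed.

Definition upper_ones n : 'M[R]_n := \matrix_(j, k) (j <= k)%:R.

Definition staircase_offset n : 'rV[R]_n :=
  \row_(k < n) \sum_(j < n | (j <= k)%N) (2 * (k%:R - j%:R) + 1).

Lemma upper_ones_unit n : upper_ones n \in unitmx.
Proof.
rewrite unitmxE -det_tr det_trig.
  by rewrite big1 ?unitr1 // => i _; rewrite !mxE leqnn.
by apply/is_trig_mxP => i j lt_ij; rewrite !mxE leqNgt lt_ij.
Qed.

Lemma staircase_sum n (x : 'rV[R]_n) : (forall j, -1 <= x 0 j <= 1) ->
  \sum_(j < n) mlp_eval (staircase_mlp n) (pair_row (x 0 j) (2 * j%:R)) =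
  x *m upper_ones n + staircase_offset n.
Proof.
move=> x_bd; apply/rowP => k.
rewrite summxE !mxE [X in _ + X]big_mkcond -big_split /=.
apply: eq_bigr => j _; rewrite staircase_mlpE !mxE relu_staircase //.
by case: leqP; rewrite ?mulr1 ?mulr0 ?add0r.
Qed.

Definition lpe_params n (lam : 'I_n -> R) : se_params R n n :=
  SEParams (fun j => 2 * j%:R - lam j) (staircase_mlp n)
    (affine_mlp (invmx (upper_ones n)) (- (staircase_offset n *m invmx (upper_ones n))))
    (fun _ => 0) (affine_mlp 1%:M 0).

Lemma struct_emb_lpe_params n (e : rel 'I_n) (V : 'M[R]_n) lam :
  V^T *m V = 1%:M -> struct_emb e V lam (lpe_params lam) = V.
Proof.
move=> hV; apply/row_matrixP => v; rewrite rowK affine_mlpE mulmx1 addr0 add0r.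
rewrite /lpe /= (eq_bigr (fun j => mlp_eval (staircase_mlp n)
                              (pair_row (row v V 0 j) (2 * j%:R)))); last first.
  by move=> j _; rewrite addrC subrK mxE.
rewrite staircase_sum; last by move=> j; rewrite mxE orthonormal_cols_entry_bound.
by rewrite affine_mlpE mulmxDl addrK mulmxK ?upper_ones_unit.
Qed.

End ExactLPE.

Theorem theorem4p1 (R : realType) (n : nat) (e : rel 'I_n)
  (normalized : bool) (V : 'M[R]_n) (lam : 'I_n -> R) (dk : R) :
  simple_graph e -> no_isolated e ->
  eigendecomp (lap normalized e) V lam ->
  0 < dk ->
  suff_node_identifying dk (fun d p => struct_emb e V lam p) /\
  suff_adjacency_identifying dk e (fun d p => struct_emb e V lam p).
Proof.
move=> _ no_iso [VtV _ _] dk_gt0.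
have VVt : V *m V^T = 1%:M := mulmx1C VtV.
have V_approx (eps : R) : 0 < eps ->
    exists p : se_params R n n, frob (V - struct_emb e V lam p) < eps.
  by exists (lpe_params lam); rewrite struct_emb_lpe_params // subrr frob0.
split; exists n, V; split => //.
  exact: node_identifying_orthonormal_rows.
exact: adjacency_identifying_orthonormal_rows.
Qed.
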